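(* Let $M=(\mathcal{S},\mathcal{A},R,T,\gamma)$ be a Markov decision process with discount factor $\gamma\in[0,1)$ and initial state distribution $\mu$, and let $\{\phi\}$ be a set of randomizations $\phi:\mathcal{S}\to\mathcal{S}'$, where $\mathcal{S}'$ is equipped with a distance $|\cdot-\cdot|$. Let $\pi$ be a policy mapping elements of $\mathcal{S}'$ to distributions over $\mathcal{A}$ which is $K_\pi$-Lipschitz over $\{\phi\}$, i.e. $$K_{\pi} = \sup_{\phi_1, \phi_2 \in \{\phi\}} \sup_{s\in \mathcal{S}} \frac{D_{TV}(\pi(\cdot|\phi_1(s)) \| \pi(\cdot|\phi_2(s)))}{ |\phi_1(s)-\phi_2(s)|}<\infty .$$ Suppose the rewards are bounded by $r_{\max}$, i.e. $|R(s,a)|\le r_{\max}$ for all $s\in\mathcal{S}$, $a\in\mathcal{A}$. For $\phi\in\{\phi\}$, let $\eta_\phi$ denote the expected discounted cumulative return $\mathbb{E}\big[\sum_{t=0}^\infty \gamma^t R(s_t,a_t)\big]$ of $\pi$ in the MDP whose states are randomized by $\phi$, i.e. $s_0\sim\mu$, $a_t\sim\pi(\cdot\mid\phi(s_t))$, $s_{t+1}\sim T(s_t,a_t)$. Then for all $\phi_1,\phi_2\in\{\phi\}$, writing $\eta_i=\eta_{\phi_i}$ and $\|\phi_1-\phi_2\|_\infty=\sup_{s\in\mathcal{S}}|\phi_1(s)-\phi_2(s)|$, $$|\eta_1 - \eta_2| \leq 2 r_{\max} \sum_{t=0}^\infty \gamma^t \min\big(1,(t+1)K_\pi\|\phi_1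 - \phi_2\|_\infty\big) \leq \frac{2 r_{\max}K_\pi }{(1-\gamma)^2}\|\phi_1 - \phi_2\|_\infty .$$
   Context: An MDP $(\mathcal{S},\mathcal{A},R,T,\gamma)$ has state space $\mathcal{S}$, action space $\mathcal{A}$, reward function $R:\mathcal{S}\times\mathcal{A}\to\mathbb{R}$, transition dynamics $T:\mathcal{S}\times\mathcal{A}\to\Pr(\mathcal{S})$ and discount factor $\gamma$. A (visual) randomization $\phi:\mathcal{S}\to\mathcal{S}'$ changes only the state observed by the agent; the reward function, transition dynamics and initial state distribution of the underlying MDP are unaffected. $D_{TV}(P\|Q)$ denotes the total variation distance between distributions $P$ and $Q$. *)

From HB Require Import structures.
From mathcomp Require Import all_boot all_order all_algebra.
From mathcomp Require Import all_classical all_reals all_analysis measurable_realfun.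
Set Implicit Arguments. Unset Strict Implicit. Unset Printing Implicit Defensive.
Import Order.TTheory GRing.Theory Num.Theory numFieldNormedType.Exports.
Local Open Scope classical_set_scope.
Local Open Scope ring_scope.

Definition rseries_sum (R : realType) (u : nat -> R) : R := limn (series u).

Definition D_TV (R : realType) (dA : measure_display) (A : measurableType dA)
  (P Q : probability A R) : R :=
  sup [set `|fine (P B) - fine (Q B)| | B in [set B : set A | measurable B]].

Definition sup_dist (R : realType) (S S' : Type) (dist : S' -> S' -> R)
  (phi1 phi2 : S -> S') : R :=
  sup [set dist (phi1 s) (phi2 s) | s in [set: S]].

Section Return.
Variables (R : realType) (dS dA : measure_display)
  (S : measurableType dS) (A : measurableType dA) (S' : Type)
  (Rw : S * A -> R) (T : S * A -> probability S R)
  (pi : S' -> probability A R) (phi : S -> S').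

(* stepV k s = E[ R(s_k, a_k) | s_0 = s ] in the MDP randomized by phi:
   a_t ~ pi(. | phi s_t), s_{t+1} ~ T(s_t, a_t). *)
Fixpoint stepV (k : nat) (s : S) : R :=
  match k with
  | 0 => \int[pi (phi s)]_(a in [set: A]) Rw (s, a)
  | k'.+1 => \int[pi (phi s)]_(a in [set: A])
               (\int[T (s, a)]_(s' in [set: S]) stepV k' s')
  end.

End Return.

Definition exp_reward (R : realType) (dS dA : measure_display)
  (S : measurableType dS) (A : measurableType dA) (S' : Type)
  (Rw : S * A -> R) (T : S * A -> probability S R)
  (pi : S' -> probability A R) (mu : probability S R) (phi : S -> S') (t : nat) : R :=
  \int[mu]_(s in [set: S]) stepV Rw T pi phi t s.

Definition disc_return (R : realType) (dS dA : measure_display)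
  (S : measurableType dS) (A : measurableType dA) (S' : Type)
  (Rw : S * A -> R) (T : S * A -> probability S R)
  (pi : S' -> probability A R) (mu : probability S R) (gamma : R) (phi : S -> S') : R :=
  rseries_sum (fun t => gamma ^+ t * exp_reward Rw T pi mu phi t).

From HB Require Import structures.
From mathcomp Require Import all_boot all_order all_algebra.
From mathcomp Require Import all_classical all_reals all_analysis measurable_realfun.
From mathcomp Require Import lra ring.
Import Order.TTheory GRing.Theory Num.Theory numFieldNormedType.Exports.
Set Implicit Arguments. Unset Strict Implicit. Unset Printing Implicit Defensive.
Local Open Scope classical_set_scope.
Local Open Scope ring_scope.

(* Let V^phi_k(s) be the expected reward at time k from state s.  The recursion
   V_(k+1)(s) = E_(a ~ pi(phi s)) E_(s' ~ T(s,a)) V_k(s') gives, by induction,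
   |V^phi1_k - V^phi2_k| <= 2 r_max (k+1) K_pi ||phi1 - phi2||: swapping the
   action distribution costs at most 2 r_max D_TV(pi(phi1 s), pi(phi2 s)), since
   the integrands are bounded by r_max, and the rest is the previous error.  As
   the error is also at most 2 r_max, summing with weights gamma^t gives the first
   bound, and sum_t (t+1) gamma^t = 1/(1-gamma)^2 the second.  The estimate
   |int f dP - int f dQ| <= 2 c D_TV(P,Q) for |f| <= c comes from the layer-cake
   formula int g dP = int_0^oo P(g > r) dr applied to g = f + c, valued in [0, 2c]. *)

Section probability_Rintegral.
Context (R : realType) d (Y : measurableType d).
Implicit Types (P Q : probability Y R) (f g : Y -> R).

Lemma probability_nonempty P : [set: Y] !=set0.
Proof.
apply/set0P/negP => /eqP Y0.
by have := probability_setT P; rewrite Y0 measure0 => -[] /eqP; rewrite eq_sym oner_eq0.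
Qed.

Lemma Rintegral_probability_cst P k : \int[P]_(y in [set: Y]) k = k.
Proof.
rewrite Rintegral_cst //.
by have -> : (P : {measure set Y -> \bar R}) [set: Y] = 1%E := probability_setT P; rewrite mulr1.
Qed.

Lemma bounded_integrable P f c :
  measurable_fun [set: Y] f -> (forall y, `|f y| <= c) ->
  P.-integrable [set: Y] (EFin \o f).
Proof.
move=> mf fc; apply: measurable_bounded_integrable => //.
  by rewrite (le_lt_trans (probability_le1 P measurableT)) ?ltry.
exists c; split; first exact: num_real.
by move=> x cx y _; exact: le_trans (fc y) (ltW cx).
Qed.

Lemma bounded_integralE P f c :
  measurable_fun [set: Y] f -> (forall y, `|f y| <= c) ->
  (\int[P]_y (f y)%:E)%E = (\int[P]_y f y)%:E.
Proof.
by move=> mf fc; rewrite /Rintegral fineK // integrable_fin_num // (bounded_integrable _ mf fc).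
Qed.

Lemma normr_Rintegral_le P f c :
  measurable_fun [set: Y] f -> (forall y, `|f y| <= c) -> `|\int[P]_y f y| <= c.
Proof.
move=> mf fc.
apply: le_trans (le_normr_Rintegral measurableT (bounded_integrable P mf fc)) _.
have -> : c = \int[P]_(y in [set: Y]) c by rewrite Rintegral_probability_cst.
apply: le_Rintegral => //.
- by apply: (bounded_integrable _ (c := c)); [exact: measurableT_comp|move=> y; rewrite normr_id].
- exact: (bounded_integrable _ (c := `|c|)).
Qed.

Lemma Rintegral_addr_cst P f c k :
  measurable_fun [set: Y] f -> (forall y, `|f y| <= c) ->
  \int[P]_y (f y + k) = \int[P]_y f y + k.
Proof.
move=> mf fc; rewrite RintegralD //.
- by rewrite Rintegral_probability_cst.
- exact: bounded_integrable mf fc.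
- exact: (bounded_integrable _ (c := `|k|)).
Qed.

Lemma Rintegral_dist_le P f g c e :
  measurable_fun [set: Y] f -> measurable_fun [set: Y] g ->
  (forall y, `|f y| <= c) -> (forall y, `|g y| <= c) ->
  (forall y, `|f y - g y| <= e) ->
  `|\int[P]_y f y - \int[P]_y g y| <= e.
Proof.
move=> mf mg fc gc fge.
rewrite -RintegralB //; [|exact: bounded_integrable mf fc|exact: bounded_integrable mg gc].
exact: normr_Rintegral_le (measurable_funB mf mg) fge.
Qed.

End probability_Rintegral.

Lemma integral_itv_scaled_indic (R : realType) (t M : R) : 0 <= t -> 0 <= M ->
  (\int[lebesgue_measure]_(r in `[0%R, +oo[)
     (t * \1_(`[0, M[%classic : set R) r)%:E = (M * t)%:E)%E.
Proof.
move=> t0 M0; under eq_integral do rewrite EFinM.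
rewrite ge0_integralZl //=; last exact/measurable_EFinP/(measurable_funS measurableT).
rewrite integral_indic // setIidl; last by move=> r /=; rewrite !in_itv /= => /andP[->].
rewrite EFinM muleC; congr (_ * _)%E.
apply: eq_trans (lebesgue_measure_itv _) _; rewrite /= lte_fin.
have [M_gt0|M_le0] := ltrP 0 M; first by rewrite -EFinD subr0.
by have -> : M = 0 by apply/eqP; rewrite eq_le M_le0 M0.
Qed.

Section total_variation.
Context (R : realType) d (Y : measurableType d).
Implicit Types (P Q : probability Y R) (f g : Y -> R).

Lemma le_D_TV P Q B : measurable B -> `|fine (P B) - fine (Q B)| <= D_TV P Q.
Proof.
move=> mB; apply: ub_le_sup; last by exists B.
have fine_01 P' B' : measurable B' -> 0 <= fine (P' B') <= 1.
  move=> mB'; rewrite -!lee_fin fineK ?fin_num_measure //.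
  by rewrite measure_ge0 probability_le1.
exists 1 => _ [B' mB' <-].
have /andP[? ?] := fine_01 P B' mB'; have /andP[? ?] := fine_01 Q B' mB'.
rewrite ler_norml; apply/andP; split; lra.
Qed.

Lemma D_TV_ge0 P Q : 0 <= D_TV P Q.
Proof. exact: le_trans (normr_ge0 _) (le_D_TV P Q measurable0). Qed.

Lemma ge0_bounded_integral_le_add P Q g M t :
  measurable_fun [set: Y] g -> (forall y, 0 <= g y <= M) ->
  (forall B, measurable B -> fine (P B) <= fine (Q B) + t) ->
  (\int[P]_y (g y)%:E <= \int[Q]_y (g y)%:E + (M * t)%:E)%E.
Proof.
move=> mg g0M PQt.
have t0 : 0 <= t by have := PQt set0 measurable0; rewrite !measure0 add0r.
have [y0 _] := probability_nonempty P.
have M0 : 0 <= M by have /andP[g0 gM] := g0M y0; exact: le_trans g0 gM.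
pose X : {RV P >-> R} := mfun_Sub (mem_set mg).
have EX P' : ('E_P'[X] = \int[P']_y (g y)%:E)%E := expectation_def (P := P') X.
have X0 y : 0 <= X y by have /andP[] := g0M y.
rewrite -!EX !ge0_expectation_ccdf // -integral_itv_scaled_indic //.
have mccdf P' : measurable_fun (`[0%R, +oo[%classic : set R) (ccdf (P := P') X).
  exact: measurable_funS (ccdf_measurable (P := P') X).
have mind : measurable_fun (`[0%R, +oo[%classic : set R)
    (fun r => (t * \1_(`[0, M[%classic : set R) r)%:E).
  by apply/measurable_EFinP/measurable_funM => //; exact/(measurable_funS measurableT).
rewrite -ge0_integralD //; [|exact: mccdf|by move=> r _; rewrite lee_fin mulr_ge0].
apply: ge0_le_integral => //; [exact: mccdf|exact: emeasurable_funD (mccdf Q) mind|].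
move=> r r0; have {}r0 : 0 <= r by move: r0; rewrite /= in_itv /= andbT.
rewrite /ccdf /distribution /pushforward /=.
set B := X @^-1` _.
have mB : measurable B by rewrite -[B]setTI; exact: (mg).
have [rM|Mr] := ltrP r M.
  rewrite indicE mem_set /= ?in_itv /= ?r0 ?rM // mulr1.
  rewrite -(fineK (fin_num_measure P _ mB)) -(fineK (fin_num_measure Q _ mB)).
  by rewrite -EFinD lee_fin PQt.
have -> : B = set0.
  apply/seteqP; split => // y; rewrite /B /= in_itv /= andbT => ry.
  by have /andP[_ gM] := g0M y; have := lt_le_trans ry (le_trans gM Mr); rewrite ltxx.
by rewrite !measure0 add0e lee_fin mulr_ge0.
Qed.

Lemma Rintegral_TV_le P Q f c :
  measurable_fun [set: Y] f -> (forall y, `|f y| <= c) ->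
  `|\int[P]_y f y - \int[Q]_y f y| <= 2 * c * D_TV P Q.
Proof.
move=> mf fc.
have mfc : measurable_fun [set: Y] (fun y => f y + c) by exact: measurable_funD.
have fc_itv y : 0 <= f y + c <= 2 * c.
  by have := fc y; rewrite ler_norml => /andP[? ?]; apply/andP; split; lra.
have fc_le y : `|f y + c| <= 2 * c.
  by have /andP[? ?] := fc_itv y; rewrite ger0_norm.
have le_add_TV P' Q' : (forall B, measurable B -> `|fine (P' B) - fine (Q' B)| <= D_TV P Q) ->
    \int[P']_y f y <= \int[Q']_y f y + 2 * c * D_TV P Q.
  move=> PQ.
  have PQt B : measurable B -> fine (P' B) <= fine (Q' B) + D_TV P Q.
    by move=> mB; have := PQ B mB; rewrite ler_norml => /andP[? ?]; lra.
  have := ge0_bounded_integral_le_add mfc fc_itv PQt.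
  rewrite !(bounded_integralE _ mfc fc_le) -EFinD lee_fin.
  rewrite !(Rintegral_addr_cst _ _ mf fc); lra.
have QP B : measurable B -> `|fine (Q B) - fine (P B)| <= D_TV P Q.
  by move=> mB; rewrite distrC; exact: le_D_TV.
have := le_add_TV P Q (fun B mB => le_D_TV P Q mB).
have := le_add_TV Q P QP.
by move=> ? ?; rewrite ler_norml; apply/andP; split; lra.
Qed.

Lemma Rintegral_dist_TV_le P Q f g c e :
  measurable_fun [set: Y] f -> measurable_fun [set: Y] g ->
  (forall y, `|f y| <= c) -> (forall y, `|g y| <= c) ->
  (forall y, `|f y - g y| <= e) ->
  `|\int[P]_y f y - \int[Q]_y g y| <= 2 * c * D_TV P Q + e.
Proof.
move=> mf mg fc gc fge.
apply: le_trans (ler_distD (\int[Q]_y f y) _ _) _.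
by apply: lerD; [exact: Rintegral_TV_le | exact: Rintegral_dist_le fge].
Qed.

End total_variation.

Section probability_kernel.
Context (R : realType) dX dY (X : measurableType dX) (Y : measurableType dY).

(* [P] as a probability kernel, so that kernel.v provides the measurability of
   parametric integrals against it. *)
Definition kernel_of (P : X -> probability Y R)
    (mP : forall U, measurable U -> measurable_fun [set: X] (fun x => P x U)) :
  X -> {measure set Y -> \bar R} := fun x => P x.

HB.instance Definition _ P mP := isKernel.Build _ _ X Y R (@kernel_of P mP) mP.
HB.instance Definition _ P mP :=
  Kernel_isProbability.Build _ _ X Y R (@kernel_of P mP) (fun x => probability_setT (P x)).

Lemma kernel_Rintegral_bounded (P : X -> probability Y R)
    (mP : forall U, measurable U -> measurable_fun [set: X] (fun x => P x U))
    (h : X * Y -> R) c :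
  measurable_fun [set: X * Y] h -> (forall z, `|h z| <= c) ->
  measurable_fun [set: X] (fun x => \int[P x]_y h (x, y)) /\
  forall x, `|\int[P x]_y h (x, y)| <= c.
Proof.
move=> mh hc.
have mhx x : measurable_fun [set: Y] (fun y => h (x, y)) by exact: measurable_fun_pair2.
split; last by move=> x; exact: normr_Rintegral_le (mhx x) (fun y => hc (x, y)).
have hc0 z : (0 <= (h z + c)%:E)%E.
  by rewrite lee_fin -lerBlDr sub0r; have := hc z; rewrite ler_norml => /andP[].
have mhc : measurable_fun [set: X * Y] (fun z => (h z + c)%:E).
  exact/measurable_EFinP/measurable_funD.
apply: (eq_measurable_fun (fun x => \int[P x]_y (h (x, y) + c) - c)).
  by move=> x _; rewrite (Rintegral_addr_cst _ _ (mhx x) (fun y => hc (x, y))) addrK.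
apply: measurable_funB => //.
exact: measurableT_comp (fine_measurable measurableT)
  (measurable_fun_integral_finite_kernel _ (kernel_of mP) hc0 mhc).
Qed.

End probability_kernel.

Section randomized_MDP.
Context (R : realType) dS dA (S : measurableType dS) (A : measurableType dA)
  (S' : Type) (Rw : S * A -> R) (T : S * A -> probability S R)
  (pi : S' -> probability A R) (r : R).
Hypothesis mRw : measurable_fun [set: S * A] Rw.
Hypothesis mT : forall B : set S, measurable B ->
  measurable_fun [set: S * A] (fun sa => (T sa B : \bar R)).
Hypothesis Rw_le : forall s a, `|Rw (s, a)| <= r.

Local Notation V := (stepV Rw T pi).

Definition measurable_policy (phi : S -> S') : Prop :=
  forall B, measurable B -> measurable_fun [set: S] (fun s => (pi (phi s) B : \bar R)).

Lemma transition_Rintegral_bounded (f : S -> R) :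
  measurable_fun [set: S] f -> (forall s, `|f s| <= r) ->
  measurable_fun [set: S * A] (fun sa => \int[T sa]_s' f s') /\
  forall sa, `|\int[T sa]_s' f s'| <= r.
Proof.
move=> mf fr.
exact: (kernel_Rintegral_bounded mT (h := f \o snd))
  (measurableT_comp mf measurable_snd) (fun z => fr z.2).
Qed.

Lemma stepV_bounded phi : measurable_policy phi ->
  forall k, measurable_fun [set: S] (V phi k) /\ forall s, `|V phi k s| <= r.
Proof.
move=> mpi; elim=> [|k [mV Vr]].
  have Rw_le' (z : S * A) : `|Rw z| <= r by case: z.
  exact: (kernel_Rintegral_bounded mpi) mRw Rw_le'.
have [mQ Qr] := transition_Rintegral_bounded mV Vr.
exact: (kernel_Rintegral_bounded mpi) mQ Qr.
Qed.

Lemma stepV_dist_le phi1 phi2 delta :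
  measurable_policy phi1 -> measurable_policy phi2 ->
  (forall s, D_TV (pi (phi1 s)) (pi (phi2 s)) <= delta) ->
  forall k s, `|V phi1 k s - V phi2 k s| <= 2 * r * (k.+1%:R * delta).
Proof.
move=> mpi1 mpi2 TV_le k s0.
have [a0 _] := probability_nonempty (pi (phi1 s0)).
have r_ge0 : 0 <= r := le_trans (normr_ge0 _) (Rw_le s0 a0).
have step_le s (f g : A -> R) e :
    measurable_fun [set: A] f -> measurable_fun [set: A] g ->
    (forall a, `|f a| <= r) -> (forall a, `|g a| <= r) -> (forall a, `|f a - g a| <= e) ->
    `|\int[pi (phi1 s)]_a f a - \int[pi (phi2 s)]_a g a| <= 2 * r * delta + e.
  move=> mf mg fr gr fge; apply: le_trans (Rintegral_dist_TV_le _ _ mf mg fr gr fge) _.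
  by rewrite lerD2r ler_wpM2l ?mulr_ge0.
elim: k s0 => [|k IH] s.
  have mRs : measurable_fun [set: A] (fun a => Rw (s, a)) by exact: measurable_fun_pair2.
  have := step_le s _ _ 0 mRs mRs (Rw_le s) (Rw_le s).
  by rewrite addr0 mul1r; apply => a; rewrite subrr normr0.
have [mV1 V1r] := stepV_bounded mpi1 k.
have [mV2 V2r] := stepV_bounded mpi2 k.
have [mQ1 Q1r] := transition_Rintegral_bounded mV1 V1r.
have [mQ2 Q2r] := transition_Rintegral_bounded mV2 V2r.
have Q_dist (sa : S * A) :
    `|\int[T sa]_s' V phi1 k s' - \int[T sa]_s' V phi2 k s'| <= 2 * r * (k.+1%:R * delta).
  exact: Rintegral_dist_le mV1 mV2 V1r V2r IH.
have := step_le s _ _ _ (measurable_fun_pair2 s mQ1) (measurable_fun_pair2 s mQ2)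
  (fun a => Q1r (s, a)) (fun a => Q2r (s, a)) (fun a => Q_dist (s, a)).
suff -> : 2 * r * (k.+2%:R * delta) = 2 * r * delta + 2 * r * (k.+1%:R * delta) by [].
by rewrite -[k.+2]addn1 natrD; ring.
Qed.

End randomized_MDP.

Lemma sum_succ_mul_exprE (F : comNzRingType) (x : F) n :
  (\sum_(0 <= t < n) t.+1%:R * x ^+ t) * (1 - x) ^+ 2 =
  1 - n.+1%:R * x ^+ n + n%:R * x ^+ n.+1.
Proof.
elim: n => [|n IH]; first by rewrite big_nil; ring.
by rewrite big_nat_recr //= mulrDl IH -!natr1 !exprS; ring.
Qed.

Section discounted_series.
Context (R : realType) (g : R).
Hypothesis g01 : 0 <= g < 1.

Lemma sum_succ_mul_expr_le n : \sum_(0 <= t < n) t.+1%:R * g ^+ t <= ((1 - g) ^+ 2)^-1.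
Proof.
have /andP[g0 g1] := g01.
rewrite -[leRHS]mul1r ler_pdivlMr ?exprn_gt0 ?subr_gt0 // sum_succ_mul_exprE.
have : n%:R * g ^+ n.+1 <= n.+1%:R * g ^+ n.
  rewrite exprS mulrA ler_wpM2r ?exprn_ge0 //.
  by apply: le_trans (ler_piMr (ler0n _ n) (ltW g1)) _; rewrite ler_nat.
lra.
Qed.

Lemma cvg_normed_discounted_series (e : nat -> R) c :
  (forall t, `|e t| <= c) -> cvgn [normed series (fun t => g ^+ t * e t)].
Proof.
move=> ec; have /andP[g0 g1] := g01.
apply: (@series_le_cvg _ _ (geometric c g)) => [t|t|t|].
- exact: normr_ge0.
- by rewrite /geometric /= mulr_ge0 ?exprn_ge0 // (le_trans _ (ec 0%N)).
- by rewrite /geometric /= normrM ger0_norm ?exprn_ge0 // mulrC ler_wpM2r ?exprn_ge0.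
- by apply: is_cvg_geometric_series; rewrite ger0_norm.
Qed.

Lemma cvg_discounted_series (e : nat -> R) c :
  (forall t, `|e t| <= c) -> cvgn (series (fun t => g ^+ t * e t)).
Proof. by move=> ec; apply: normed_cvg; exact: cvg_normed_discounted_series ec. Qed.

Lemma rseries_sum_dist_le (e1 e2 m : nat -> R) c b k :
  (forall t, `|e1 t| <= c) -> (forall t, `|e2 t| <= c) -> (forall t, `|m t| <= b) ->
  (forall t, `|e1 t - e2 t| <= k * m t) ->
  `|rseries_sum (fun t => g ^+ t * e1 t) - rseries_sum (fun t => g ^+ t * e2 t)|
    <= k * rseries_sum (fun t => g ^+ t * m t).
Proof.
move=> e1c e2c mb e12.
have /andP[g0 _] := g01.
have e12c t : `|e1 t - e2 t| <= c + c := le_trans (ler_normB _ _) (lerD (e1c t) (e2c t)).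
have cvg_m := cvg_discounted_series mb.
rewrite /rseries_sum -lim_seriesB; [|exact: cvg_discounted_series e1c|exact: cvg_discounted_series e2c].
have -> : (fun t => g ^+ t * e1 t) - (fun t => g ^+ t * e2 t) = (fun t => g ^+ t * (e1 t - e2 t)).
  by apply/funext => t; rewrite /= mulrBr.
apply: le_trans (lim_series_norm (cvg_normed_discounted_series e12c)) _.
rewrite (_ : k * _ = limn (series (k *: (fun t => g ^+ t * m t)))); last by rewrite lim_seriesZ.
apply: lim_series_le => [| |t]; [exact: cvg_normed_discounted_series e12c|exact: is_cvg_seriesZ|].
rewrite /= normrM ger0_norm ?exprn_ge0 //.
change (g ^+ t * `|e1 t - e2 t| <= k * (g ^+ t * m t)).
by rewrite mulrCA ler_wpM2l ?exprn_ge0.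
Qed.

Lemma discounted_min_series_le x : 0 <= x ->
  rseries_sum (fun t => g ^+ t * Num.min 1 (t.+1%:R * x)) <= x / (1 - g) ^+ 2.
Proof.
move=> x0; have /andP[g0 _] := g01.
have min_le t : `|Num.min 1 (t.+1%:R * x)| <= 1.
  by rewrite ger0_norm ?ge_min ?lexx // le_min ler01 mulr_ge0.
apply: limr_le; first exact: cvg_discounted_series min_le.
apply: nearW => n; rewrite /series /=.
apply: (@le_trans _ _ (x * \sum_(0 <= t < n) t.+1%:R * g ^+ t)).
  rewrite big_distrr /=; apply: ler_sum => t _.
  rewrite (_ : x * _ = g ^+ t * (t.+1%:R * x)); last by ring.
  by rewrite ler_wpM2l ?exprn_ge0 // ge_min lexx orbT.
by rewrite ler_wpM2l // sum_succ_mul_expr_le.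
Qed.

End discounted_series.

Theorem proposition1 (R : realType) (dS dA : measure_display)
  (S : measurableType dS) (A : measurableType dA) (S' : Type)
  (dist : S' -> S' -> R)
  (Rw : S * A -> R) (T : S * A -> probability S R) (gamma : R)
  (mu : probability S R) (Phi : set (S -> S')) (pi : S' -> probability A R)
  (K_pi r_max : R) :
  (* discount factor *)
  0 <= gamma < 1 ->
  (* measurability (standing assumptions of a measurable MDP) *)
  measurable_fun [set: S * A] Rw ->
  (forall B : set S, measurable B -> measurable_fun [set: S * A] (fun sa : S * A => (T sa B : \bar R))) ->
  (forall phi, Phi phi -> forall B : set A, measurable B ->
     measurable_fun [set: S] (fun s : S => (pi (phi s) B : \bar R))) ->
  (* bounded rewards *)
  (forall s a, `|Rw (s, a)| <= r_max) ->
  (* pi is K_pi-Lipschitz over Phi *)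
  0 <= K_pi ->
  (forall phi1 phi2, Phi phi1 -> Phi phi2 -> forall s : S,
     D_TV (pi (phi1 s)) (pi (phi2 s)) <= K_pi * dist (phi1 s) (phi2 s)) ->
  forall phi1 phi2, Phi phi1 -> Phi phi2 ->
  (* ||phi1 - phi2||_oo is finite *)
  has_ubound [set dist (phi1 s) (phi2 s) | s in [set: S]] ->
  let D := sup_dist dist phi1 phi2 in
  let bound := 2 * r_max *
     rseries_sum (fun t => gamma ^+ t * Num.min 1 (t.+1%:R * K_pi * D)) in
  `|disc_return Rw T pi mu gamma phi1 - disc_return Rw T pi mu gamma phi2| <= bound /\
  bound <= 2 * r_max * K_pi / (1 - gamma) ^+ 2 * D.
Proof.
move=> g01 mRw mT mpi Rw_le K_ge0 Lip phi1 phi2 Phi1 Phi2 D_ub D bound.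
have [s0 _] := probability_nonempty mu.
have [a0 _] := probability_nonempty (pi (phi1 s0)).
have r_ge0 : 0 <= r_max := le_trans (normr_ge0 _) (Rw_le s0 a0).
have TV_le s : D_TV (pi (phi1 s)) (pi (phi2 s)) <= K_pi * D.
  apply: le_trans (Lip _ _ Phi1 Phi2 s) _; rewrite ler_wpM2l //.
  by rewrite /D /sup_dist; apply: (ub_le_sup D_ub); exists s.
have KD_ge0 : 0 <= K_pi * D := le_trans (D_TV_ge0 _ _) (TV_le s0).
have V_le phi (Phi_phi : Phi phi) t := stepV_bounded mRw mT Rw_le (mpi _ Phi_phi) t.
have e_le phi : Phi phi -> forall t, `|exp_reward Rw T pi mu phi t| <= r_max.
  by move=> Phi_phi t; have [mV Vr] := V_le _ Phi_phi t; exact: normr_Rintegral_le mV Vr.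
have min_le t : `|Num.min 1 (t.+1%:R * K_pi * D)| <= 1.
  by rewrite ger0_norm ?ge_min ?lexx // le_min ler01 -mulrA mulr_ge0.
split; rewrite /bound.
  apply: (rseries_sum_dist_le g01 (e_le _ Phi1) (e_le _ Phi2) min_le) => t.
  have [[mV1 V1r] [mV2 V2r]] := (V_le _ Phi1 t, V_le _ Phi2 t).
  have := stepV_dist_le mRw mT Rw_le (mpi _ Phi1) (mpi _ Phi2) TV_le t.
  move=> /(Rintegral_dist_le mu mV1 mV2 V1r V2r); rewrite (mulrA t.+1%:R) => dist_le.
  rewrite /exp_reward minr_pMr ?mulr_ge0 // mulr1 le_min dist_le andbT.
  by apply: le_trans (ler_normB _ _) _; have := e_le _ Phi1 t; have := e_le _ Phi2 t; lra.
have -> : (fun t => gamma ^+ t * Num.min 1 (t.+1%:R * K_pi * D)) =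
          (fun t => gamma ^+ t * Num.min 1 (t.+1%:R * (K_pi * D))).
  by apply/funext => t; rewrite mulrA.
apply: le_trans (ler_wpM2l _ (discounted_min_series_le g01 KD_ge0)) _; first exact: mulr_ge0.
by rewrite !mulrA mulrAC.
Qed.
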